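(* Let $Q$ be a based quantale with base locale $Q_0$. Every equivariant support $\varsigma$ on $Q$ is stable, i.e. $\varsigma(xy)\le\varsigma(x)$ for all $x,y\in Q$.
   Context: For a locale $A$, an $A$-$A$-bimodule is a sup-lattice $M$ with actions $a\triangleright m$, $m\triangleleft a$ preserving joins in each variable, with $1_A\triangleright m=m$, $(a\wedge b)\triangleright m=a\triangleright(b\triangleright m)$, $m\triangleleft1_A=m$, $m\triangleleft(a\wedge b)=(m\triangleleft a)\triangleleft b$, $(a\triangleright m)\triangleleft b=a\triangleright(m\triangleleft b)$. An $A$-$A$-quantale is such a $Q$ with associative join-preserving multiplication and $(a\triangleright x)y=a\triangleright(xy)$, $(x\triangleleft a)y=x(a\triangleright y)$, $(xy)\triangleleft a=x(y\triangleleft a)$; involutive if there is a join-preserving $x\mapsto x^*$ with $x^{**}=x$, $(xy)^*=y^*x^*$, $(a\triangleright(x\triangleleft b))^*=b\triangleright(x^*\triangleleft a)$. A based quantale is an involutive $Q_0$-$Q_0$-quantale for a locale $Q_0$. A support is a join-preserving $\varsigma:Q\to Q_0$ with $\varsigma(1_Q)=1_{Q_0}$, $\varsigma(x)\triangleright y\le xx^*y$, $\varsigma(x)\triangleright x=x$; it is equivariant if $\varsigma(a\triangleright x)=a\wedge\varsigma(x)$ for all $a\in Q_0$, $x\in Q$. *)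

(* sup-lattices, locales and based quantales defined from scratch,
   with subsets represented as predicates T -> Prop and Leibniz equality. *)
Set Implicit Arguments.
Unset Strict Implicit.

Definition image {A B : Type} (f : A -> B) (S : A -> Prop) : B -> Prop :=
  fun y => exists x, S x /\ y = f x.

Definition is_lub {T : Type} (le : T -> T -> Prop) (S : T -> Prop) (x : T) : Prop :=
  (forall s, S s -> le s x) /\ (forall y, (forall s, S s -> le s y) -> le x y).

Record is_suplattice {T : Type} (le : T -> T -> Prop) (join : (T -> Prop) -> T) : Prop := {
  sl_refl : forall x, le x x;
  sl_trans : forall x y z, le x y -> le y z -> le x z;
  sl_antisym : forall x y, le x y -> le y x -> x = y;
  sl_join_lub : forall S, is_lub le S (join S)
}.

Definition join_preserving {A B : Type} (joinA : (A -> Prop) -> A) (joinB : (B -> Prop) -> B)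
  (f : A -> B) : Prop :=
  forall S, f (joinA S) = joinB (image f S).

Record Locale := {
  L_car :> Type;
  L_le : L_car -> L_car -> Prop;
  L_join : (L_car -> Prop) -> L_car;
  L_meet : L_car -> L_car -> L_car;
  L_suplattice : is_suplattice L_le L_join;
  L_meet_l : forall a b, L_le (L_meet a b) a;
  L_meet_r : forall a b, L_le (L_meet a b) b;
  L_meet_glb : forall a b c, L_le c a -> L_le c b -> L_le c (L_meet a b);
  L_distr : forall a S, L_meet a (L_join S) = L_join (image (L_meet a) S)
}.

Definition L_top (A : Locale) : L_car A := @L_join A (fun _ => True).

Record BasedQuantale (Q0 : Locale) := {
  Q_car :> Type;
  Q_le : Q_car -> Q_car -> Prop;
  Q_join : (Q_car -> Prop) -> Q_car;
  Q_lact : Q0 -> Q_car -> Q_car;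
  Q_ract : Q_car -> Q0 -> Q_car;
  Q_mul : Q_car -> Q_car -> Q_car;
  Q_star : Q_car -> Q_car;
  Q_suplattice : is_suplattice Q_le Q_join;
  Q_lact_join_l : forall m, join_preserving (@L_join Q0) Q_join (fun a => Q_lact a m);
  Q_lact_join_r : forall a, join_preserving Q_join Q_join (Q_lact a);
  Q_ract_join_l : forall a, join_preserving Q_join Q_join (fun m => Q_ract m a);
  Q_ract_join_r : forall m, join_preserving (@L_join Q0) Q_join (Q_ract m);
  Q_lact_top : forall m, Q_lact (L_top Q0) m = m;
  Q_lact_meet : forall a b m, Q_lact (@L_meet Q0 a b) m = Q_lact a (Q_lact b m);
  Q_ract_top : forall m, Q_ract m (L_top Q0) = m;
  Q_ract_meet : forall a b m, Q_ract m (@L_meet Q0 a b) = Q_ract (Q_ract m a) b;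
  Q_lact_ract : forall a b m, Q_ract (Q_lact a m) b = Q_lact a (Q_ract m b);
  Q_mul_assoc : forall x y z, Q_mul (Q_mul x y) z = Q_mul x (Q_mul y z);
  Q_mul_join_l : forall y, join_preserving Q_join Q_join (fun x => Q_mul x y);
  Q_mul_join_r : forall x, join_preserving Q_join Q_join (Q_mul x);
  Q_lact_mul : forall a x y, Q_mul (Q_lact a x) y = Q_lact a (Q_mul x y);
  Q_ract_mul : forall a x y, Q_mul (Q_ract x a) y = Q_mul x (Q_lact a y);
  Q_mul_ract : forall a x y, Q_ract (Q_mul x y) a = Q_mul x (Q_ract y a);
  Q_star_join : join_preserving Q_join Q_join Q_star;
  Q_star_invol : forall x, Q_star (Q_star x) = x;
  Q_star_mul : forall x y, Q_star (Q_mul x y) = Q_mul (Q_star y) (Q_star x);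
  Q_star_act : forall a b x,
    Q_star (Q_lact a (Q_ract x b)) = Q_lact b (Q_ract (Q_star x) a)
}.

Definition Q_top (Q0 : Locale) (Q : BasedQuantale Q0) : Q_car Q := @Q_join Q0 Q (fun _ => True).

Definition is_support (Q0 : Locale) (Q : BasedQuantale Q0) (s : Q -> Q0) : Prop :=
  join_preserving (@Q_join Q0 Q) (@L_join Q0) s /\
  s (Q_top Q) = L_top Q0 /\
  (forall x y, @Q_le Q0 Q (@Q_lact Q0 Q (s x) y) (@Q_mul Q0 Q (@Q_mul Q0 Q x (@Q_star Q0 Q x)) y)) /\
  (forall x, @Q_lact Q0 Q (s x) x = x).

Definition equivariant (Q0 : Locale) (Q : BasedQuantale Q0) (s : Q -> Q0) : Prop :=
  forall (a : Q0) (x : Q), s (@Q_lact Q0 Q a x) = @L_meet Q0 a (s x).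

Definition stable (Q0 : Locale) (Q : BasedQuantale Q0) (s : Q -> Q0) : Prop :=
  forall x y : Q, @L_le Q0 (s (@Q_mul Q0 Q x y)) (s x).

(* Since [s x |> x = x], also [x y = s x |> (x y)]; equivariance then gives
   [s (x y) = s x /\ s (x y) <= s x]. *)


Set Implicit Arguments.
Unset Strict Implicit.

Section EquivariantSupport.

Variables (Q0 : Locale) (Q : BasedQuantale Q0) (s : Q -> Q0).

Lemma lact_support_mul :
  (forall x, @Q_lact Q0 Q (s x) x = x) ->
  forall x y, @Q_lact Q0 Q (s x) (@Q_mul Q0 Q x y) = @Q_mul Q0 Q x y.
Proof.
  intros Hsupp x y.
  rewrite <- Q_lact_mul, Hsupp.
  reflexivity.
Qed.

Lemma equivariant_le_lact :
  equivariant s -> forall a x, @L_le Q0 (s (@Q_lact Q0 Q a x)) a.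
Proof.
  intros Heq a x.
  rewrite Heq.
  apply L_meet_l.
Qed.

End EquivariantSupport.

Theorem lemma3p19 (Q0 : Locale) (Q : BasedQuantale Q0) (s : Q -> Q0) :
  is_support s -> equivariant s -> stable s.
Proof.
  intros [_ [_ [_ Hsupp]]] Heq x y.
  rewrite <- (lact_support_mul Hsupp x y).
  apply equivariant_le_lact, Heq.
Qed.
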